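(* Let $K$ be a field of characteristic $0$ and let $\mathcal{U}$ be the variety of $K$-algebras that are alternative and satisfy $(ab)c=(ba)c$. For $n\ge1$ let $U_n$ denote the multilinear component of degree $n$ of the free $\mathcal{U}$-algebra on $x_1,\dots,x_n$. Then a basis of $U_n$ is given by: \begin{itemize} \item $n=1$: $x_1$; \quad $n=2$: $x_1x_2,\ x_2x_1$; \item $n=3$: $(x_1x_2)x_3,\ (x_1x_3)x_2,\ x_3(x_1x_2),\ x_3(x_2x_1)$; \item $n\ge4$: the $n$ left-normed monomials $((\cdots((x_{i_1}x_{i_2})x_{i_3})\cdots)x_{i_{n-1}})x_k$, $k=1,\dots,n$, where $i_1<\cdots<i_{n-1}$ is the increasing enumeration of $\{1,\dots,n\}\setminus\{k\}$. \end{itemize}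
   Context: An algebra is alternative if $(a,a,b)=0=(a,b,b)$ for all $a,b$, where $(a,b,c)=(ab)c-a(bc)$. This variety $\mathcal{U}$ is the Koszul dual (Ginzburg–Kapranov) of the variety $\mathcal{LS}_{\mathfrak{A}_2}$ of left-symmetric algebras (those with $(a,b,c)=(b,a,c)$) satisfying additionally $a(bc)+b(ac)+a(cb)+c(ab)+b(ca)+c(ba)=0$. *)

From HB Require Import structures.
From mathcomp Require Import all_boot all_order all_algebra.
Set Implicit Arguments. Unset Strict Implicit. Unset Printing Implicit Defensive.
Import GRing.Theory.
Local Open Scope ring_scope.

(* Nonassociative monomials: binary trees whose leaves are variables x_i,
   the index i being a natural number (we use x_1, ..., x_n). *)
Inductive nmon : Type :=
| Leaf of nat
| Node of nmon & nmon.

Fixpoint leaves (t : nmon) : seq nat :=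
  match t with
  | Leaf i => [:: i]
  | Node l r => leaves l ++ leaves r
  end.

Definition multilinear (n : nat) (t : nmon) : bool :=
  perm_eq (leaves t) (iota 1 n).

Fixpoint nm_eval (A : Type) (mul : A -> A -> A) (a : nat -> A) (t : nmon) : A :=
  match t with
  | Leaf i => a i
  | Node l r => mul (nm_eval mul a l) (nm_eval mul a r)
  end.

Definition U_algebra (K : fieldType) (A : lmodType K) (mul : A -> A -> A) : Prop :=
  [/\ (forall (k : K) (x y z : A), mul (k *: x + y) z = k *: mul x z + mul y z),
      (forall (k : K) (x y z : A), mul x (k *: y + z) = k *: mul x y + mul x z),
      (forall x y : A, mul (mul x x) y = mul x (mul x y)),
      (forall x y : A, mul (mul x y) y = mul x (mul y y)) &
      (forall x y z : A, mul (mul x y) z = mul (mul y x) z)].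

(* Left-normed monomial ((..(x_{i1} x_{i2}) ..) x_{im}); the default leaf
   is only used for the empty sequence (never in the statement). *)
Definition lnorm (d : nat) (s : seq nat) : nmon :=
  match s with
  | [::] => Leaf d
  | h :: t => foldl (fun m i => Node m (Leaf i)) (Leaf h) t
  end.

Definition Ubasis (n : nat) : seq nmon :=
  match n with
  | 0 => [::]
  | 1 => [:: Leaf 1]
  | 2 => [:: Node (Leaf 1) (Leaf 2); Node (Leaf 2) (Leaf 1)]
  | 3 => [:: Node (Node (Leaf 1) (Leaf 2)) (Leaf 3);
             Node (Node (Leaf 1) (Leaf 3)) (Leaf 2);
             Node (Leaf 3) (Node (Leaf 1) (Leaf 2));
             Node (Leaf 3) (Node (Leaf 2) (Leaf 1))]
  | _ => [seq Node (lnorm k [seq i <- iota 1 n | i != k]) (Leaf k) | k <- iota 1 n]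
  end.

(* Equality of two K-linear combinations of monomials in the free U-algebra,
   i.e. their difference is an identity of the variety U (holds in every
   U-algebra under every evaluation of the variables). *)
Definition U_eq (K : fieldType) (f g : seq (K * nmon)) : Prop :=
  forall (A : lmodType K) (mul : A -> A -> A), U_algebra mul ->
  forall a : nat -> A,
    \sum_(p <- f) p.1 *: nm_eval mul a p.2 = \sum_(p <- g) p.1 *: nm_eval mul a p.2.

(* Linearizing the two alternative laws makes the associator (x,y,z) alternating;
   together with (xy)z = (yx)z this gives the relations of degree 3, which express the
   twelve multilinear monomials of degree 3 through the four basis elements.
   In degree 4, right multiplication by w turns the alternation of (x,y,z) into the
   relation 2g(x,y,z) = g(z,y,x) + g(x,z,y) for g(x,y,z) := ((xy)z)w, so g is symmetric
   (3 is invertible) and (x,y,z)w = 0.  Teichmuller's identity then shows that an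
   associator with a product among its arguments vanishes (2 is invertible).  Hence a
   monomial of degree n >= 4 equals the left-normed product of its variables, which is
   symmetric in all but its last factor: it is the basis element indexed by its
   rightmost variable.
   Independence is read off two small U-algebras: K^2 with (x1,x2)(y1,y2) = (x1y1, x1y2),
   in which a monomial remembers its rightmost variable, and, for n = 3, a nilpotent
   algebra built on the cross product of K^3. *)

From HB Require Import structures.
From mathcomp Require Import all_boot all_order all_algebra sesquilinear.
From mathcomp Require Import ring zify.
Set Implicit Arguments. Unset Strict Implicit. Unset Printing Implicit Defensive.
Import GRing.Theory.
Local Open Scope ring_scope.

(* Atoms are compared up to conversion, so that occurrences of a product that
   differ only in the inferred structure instances count as the same atom. *)
Inductive zterm : Type :=
  | ZVar of nat | ZZero | ZOpp of zterm | ZAdd of zterm & zterm | ZMulz of zterm & int.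

Fixpoint zcoef (e : zterm) (i : nat) : int :=
  match e with
  | ZVar j => (i == j)%:Z
  | ZZero => 0
  | ZOpp e => - zcoef e i
  | ZAdd e1 e2 => zcoef e1 i + zcoef e2 i
  | ZMulz e z => zcoef e i * z
  end.

Section ZmodLinear.
Variable V : zmodType.

Fixpoint zeval (env : seq V) (e : zterm) : V :=
  match e with
  | ZVar i => env`_i
  | ZZero => 0
  | ZOpp e => - zeval env e
  | ZAdd e1 e2 => zeval env e1 + zeval env e2
  | ZMulz e z => zeval env e *~ z
  end.

Lemma zevalE env e : zeval env e = \sum_(i < size env) env`_i *~ zcoef e i.
Proof.
elim: e => [j||e IHe|e1 IH1 e2 IH2|e IHe n] /=.
- have [ltj|lej] := ltnP j (size env); last first.
    rewrite nth_default // big1 // => i _.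
    by rewrite ltn_eqF ?mulr0z // (leq_trans (ltn_ord i) lej).
  rewrite (bigD1 (Ordinal ltj)) //= eqxx mulr1z big1 ?addr0 // => i.
  by rewrite -val_eqE /= => /negbTE ->; rewrite mulr0z.
- by rewrite big1 // => i _; rewrite mulr0z.
- by rewrite IHe -sumrN; apply: eq_bigr => i _; rewrite mulrNz.
- by rewrite IH1 IH2 -big_split; apply: eq_bigr => i _; rewrite mulrzDr.
- by rewrite IHe mulrz_suml; apply: eq_bigr => i _; rewrite mulrzA.
Qed.

Lemma zeval_eq env e1 e2 :
  all (fun i => zcoef e1 i == zcoef e2 i) (iota 0 (size env)) ->
  zeval env e1 = zeval env e2.
Proof.
move/allP=> eq12; rewrite !zevalE; apply: eq_bigr => i _.
by rewrite (eqP (eq12 i _)) // mem_iota add0n ltn_ord.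
Qed.

Lemma eq_by_subr (x y u v : V) : x - y = u - v -> u = v -> x = y.
Proof. by move=> e uv; apply/subr0_eq; rewrite e uv subrr. Qed.

End ZmodLinear.

Ltac zconv x y :=
  constr:(ltac:(first [ unify x y; exact true | exact false ]) : bool).

Ltac zmem x l :=
  lazymatch l with
  | nil => constr:(false)
  | cons ?y ?l' => lazymatch zconv x y with true => constr:(true) | false => zmem x l' end
  end.

Ltac zatoms t l :=
  lazymatch t with
  | ?a + ?b => let l := zatoms a l in zatoms b l
  | - ?a => zatoms a l
  | ?a *+ _ => zatoms a l
  | ?a *~ _ => zatoms a l
  | 0 => l
  | _ => lazymatch zmem t l with true => l | false => constr:(cons t l) end
  end.

Ltac zindex x l :=
  lazymatch l with
  | cons ?y ?l' =>
      lazymatch zconv x y with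
      | true => constr:(O)
      | false => let n := zindex x l' in constr:(S n)
      end
  end.

Ltac zreify t l :=
  lazymatch t with
  | ?a + ?b => let ea := zreify a l in let eb := zreify b l in constr:(ZAdd ea eb)
  | - ?a => let ea := zreify a l in constr:(ZOpp ea)
  | ?a *+ ?n => let ea := zreify a l in constr:(ZMulz ea (Posz n))
  | ?a *~ ?z => let ea := zreify a l in constr:(ZMulz ea z)
  | 0 => constr:(ZZero)
  | _ => let i := zindex t l in constr:(ZVar i)
  end.

Ltac lin_zmod :=
  lazymatch goal with
  | |- @eq ?T ?lhs ?rhs =>
    let l := zatoms lhs (@nil T) in let l := zatoms rhs l in
    let el := zreify lhs l in let er := zreify rhs l in
    change (zeval l el = zeval l er); apply: zeval_eq; vm_compute; reflexivity
  end.

Ltac lin_zmod_from h :=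
  first [ apply: (eq_by_subr _ h); lin_zmod
        | apply: (eq_by_subr _ (esym h)); lin_zmod ].

Definition assoc (V : zmodType) (mul : V -> V -> V) (x y z : V) : V :=
  mul (mul x y) z - mul x (mul y z).

Lemma teichmuller (R : nzRingType) (V : lmodType R) (mul : {bilinear V -> V -> V}) a b c d :
  assoc mul (mul a b) c d - assoc mul a (mul b c) d + assoc mul a b (mul c d)
  = mul a (assoc mul b c d) + mul (assoc mul a b c) d.
Proof. by rewrite /assoc linearBl linearBr; lin_zmod. Qed.

Lemma char0_lmod_mulrn_eq0 (K : fieldType) (V : lmodType K) (v : V) n :
  [pchar K] =i pred0 -> (0 < n)%N -> v *+ n = 0 -> v = 0.
Proof.
move=> charK0 n_gt0 /eqP; rewrite -scaler_nat scaler_eq0 => /orP[|/eqP //].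
by move/pcharf0P: charK0 => ->; rewrite eqn0Ngt n_gt0.
Qed.

Section UAlgebra.
Variables (K : fieldType) (A : lmodType K) (mul : A -> A -> A).
Hypothesis HU : U_algebra mul.

Lemma U_bilinear : bilinear_for *:%R *:%R mul.
Proof. by case: HU => mulPl mulPr _ _ _; split=> u k x y; [exact: mulPl | exact: mulPr]. Qed.

HB.instance Definition _ := bilinear_isBilinear.Build K A A A *:%R *:%R mul U_bilinear.

Local Notation asc := (assoc mul).

Lemma mulCl x y z : mul (mul x y) z = mul (mul y x) z.
Proof. by case: HU. Qed.

Lemma assoc_swap12 x y z : asc y x z = - asc x y z.
Proof.
case: HU => _ _ alt_l _ _; have := alt_l (x + y) z.
rewrite !(linearDl, linearDr) /= (alt_l x z) (alt_l y z) /assoc => h; lin_zmod_from h.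
Qed.

Lemma assoc_swap23 x y z : asc x z y = - asc x y z.
Proof.
case: HU => _ _ _ alt_r _; have := alt_r x (y + z).
rewrite !(linearDl, linearDr) /= (alt_r x y) (alt_r x z) /assoc => h; lin_zmod_from h.
Qed.

Lemma left_alt_lin x y z : mul x (mul y z) + mul y (mul x z) = mul (mul x y) z *+ 2.
Proof. by have := assoc_swap12 x y z; rewrite /assoc (mulCl y) => h; lin_zmod_from h. Qed.

Lemma right_alt_lin x y z :
  mul x (mul y z) + mul x (mul z y) = mul (mul x y) z + mul (mul x z) y.
Proof. by have := assoc_swap23 x y z; rewrite /assoc => h; lin_zmod_from h. Qed.

(* [mul3_i_jk] and [mul3_ij_k] express x_i(x_j x_k) and (x_i x_j)x_k, where
   (x1, x2, x3) = (x, y, z), in the basis (x1x2)x3, (x1x3)x2, x3(x1x2), x3(x2x1). *)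
Lemma mul3_1_32 x y z : mul x (mul z y) = mul (mul x z) y *+ 2 - mul z (mul x y).
Proof. by have := left_alt_lin x z y => h; lin_zmod_from h. Qed.

Lemma mul3_1_23 x y z : mul x (mul y z) = mul (mul x y) z - mul (mul x z) y + mul z (mul x y).
Proof. by have := right_alt_lin x y z; rewrite (mul3_1_32 x y z) => h; lin_zmod_from h. Qed.

Lemma mul3_2_13 x y z : mul y (mul x z) = mul (mul x y) z + mul (mul x z) y - mul z (mul x y).
Proof. by have := left_alt_lin x y z; rewrite (mul3_1_23 x y z) => h; lin_zmod_from h. Qed.

Lemma mul3_23_1 x y z : mul (mul y z) x = mul z (mul x y) + mul z (mul y x) - mul (mul x z) y.
Proof.
have e : mul y (mul z x) = mul (mul y z) x - mul (mul x z) y + mul z (mul x y).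
  by have := right_alt_lin y x z; rewrite (mul3_2_13 x y z) (mulCl y x) => h; lin_zmod_from h.
by have := left_alt_lin y z x; rewrite e => h; lin_zmod_from h.
Qed.

Lemma mul3_2_31 x y z :
  mul y (mul z x) = mul z (mul x y) *+ 2 + mul z (mul y x) - mul (mul x z) y *+ 2.
Proof. by have := left_alt_lin y z x; rewrite (mul3_23_1 x y z) => h; lin_zmod_from h. Qed.

Hypothesis charK0 : [pchar K] =i pred0.

Lemma mul3_swap23 x y z w : mul (mul (mul x y) z) w = mul (mul (mul x z) y) w.
Proof.
pose g a b c := mul (mul (mul a b) c) w.
have g_rel a b c : g a b c *+ 2 = g c b a + g a c b.
  have := congr1 (mul^~ w) (assoc_swap12 a b c).
  rewrite /= /assoc linearBl linearNl linearBl /= (mulCl b a) (mulCl a (mul b c)).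
  by rewrite (mulCl b (mul a c)) (mulCl b c) => h; rewrite /g; lin_zmod_from h.
(* the difference of two instances of [g_rel] is 3 (g x y z - g x z y) *)
apply/subr0_eq/(char0_lmod_mulrn_eq0 (n := 3) charK0) => //.
transitivity ((g x y z *+ 2 - (g z y x + g x z y)) - (g x z y *+ 2 - (g y z x + g x y z))).
  by rewrite /g (mulCl y z); lin_zmod.
by rewrite !g_rel !subrr.
Qed.

Lemma mul_assoc_eq0 x y z w : mul (asc x y z) w = 0.
Proof.
rewrite /assoc linearBl /= (mulCl x (mul y z)) (mulCl y z) (mul3_swap23 z y x w).
by rewrite (mulCl z x) (mul3_swap23 x z y w) subrr.
Qed.

Lemma mul_mulA x y z w : mul (mul x (mul y z)) w = mul (mul (mul x y) z) w.
Proof. by apply/esym/subr0_eq; move: (mul_assoc_eq0 x y z w); rewrite /assoc linearBl. Qed.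

Lemma assoc_mul1_eq0 p q y z : asc (mul p q) y z = 0.
Proof.
have asc_mulC a b c d : asc (mul a b) c d = asc (mul b a) c d by rewrite /assoc !(mulCl a b).
have teich a b c d : asc (mul a b) c d + asc (mul b c) a d + asc (mul c d) a b = mul a (asc b c d).
  have := teichmuller (mul : {bilinear A -> A -> A}) a b c d.
  rewrite /= mul_assoc_eq0 addr0 (assoc_swap12 (mul b c)) (assoc_swap23 a (mul c d)).
  by rewrite (assoc_swap12 (mul c d)) !opprK => h; lin_zmod_from h.
have teich_cd a b c d : asc (mul c d) a b *+ 2 + asc (mul b c) a d + asc (mul b d) a c = 0.
  have := teich a b d c; rewrite (assoc_swap23 b c d) linearNr /= -(teich a b c d).
  by rewrite (assoc_swap23 (mul a b) c d) (asc_mulC d c) => h; lin_zmod_from h.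
have swap_out a b c d : asc (mul c d) a b = asc (mul b d) a c.
  have := teich_cd a c b d; rewrite (asc_mulC c b) -(teich_cd a b c d) => h; lin_zmod_from h.
(* T(x,y,z,w) := (xy,z,w) changes sign when z and w are exchanged and, by [swap_out], is
   invariant when x and w are; three steps of each kind bring T back to -T. *)
apply: (char0_lmod_mulrn_eq0 (n := 2) charK0) => //.
apply/eqP; rewrite mulr2n addr_eq0; apply/eqP.
rewrite {1}(assoc_swap23 (mul p q) z y) (swap_out z y p q) (assoc_swap23 (mul y q) p z) opprK.
by rewrite (swap_out p z y q) (assoc_swap23 (mul z q) y p) (swap_out y p z q).
Qed.

Lemma assoc_mul2_eq0 x p q z : asc x (mul p q) z = 0.
Proof. by rewrite assoc_swap12 assoc_mul1_eq0 oppr0. Qed.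

Lemma assoc_mul3_eq0 x y p q : asc x y (mul p q) = 0.
Proof. by rewrite assoc_swap23 assoc_mul2_eq0 oppr0. Qed.

End UAlgebra.

Lemma perm_eq_swap_invariant (T : eqType) (R : Type) (f : seq T -> R) :
  (forall s1 s2 x y, f (s1 ++ x :: y :: s2) = f (s1 ++ y :: x :: s2)) ->
  forall s s', perm_eq s s' -> f s = f s'.
Proof.
have to_front (g : seq T -> R) :
    (forall s1 s2 x y, g (s1 ++ x :: y :: s2) = g (s1 ++ y :: x :: s2)) ->
    forall s1 s2 x, g (s1 ++ x :: s2) = g (x :: s1 ++ s2).
  move=> swap_g s1; elim: s1 g swap_g => [//|y s1 IHs1] g swap_g s2 x /=.
  have /= -> := IHs1 (fun t => g (y :: t)) (fun t1 => swap_g (y :: t1)) s2 x.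
  exact: (swap_g [::]).
move=> swap_f s; elim: s f swap_f => [|x s IHs] f swap_f s' eq_ss'.
  by move/perm_size/esym/size0nil: eq_ss' ->.
have x_s' : x \in s' by rewrite -(perm_mem eq_ss') mem_head.
move: eq_ss'; case/splitPr: x_s' => s1 s2 eq_ss'.
rewrite (to_front _ swap_f).
apply: (IHs (fun t => f (x :: t))) => [t1 t2 u v|]; first exact: (swap_f (x :: t1)).
rewrite -(perm_cons x); apply: perm_trans eq_ss' _.
by rewrite -[x :: s2]cat1s perm_catCA.
Qed.

Lemma size_leaves_gt0 t : (0 < size (leaves t))%N.
Proof. by elim: t => [//|l IHl r _] /=; rewrite size_cat addn_gt0 IHl. Qed.

Fixpoint rightmost (t : nmon) : nat :=
  match t with Leaf i => i | Node _ r => rightmost r end.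

Lemma rightmost_leaves t : rightmost t \in leaves t.
Proof. by elim: t => [i|l _ r IHr] /=; rewrite ?mem_seq1 // mem_cat IHr orbT. Qed.

Lemma leaves1 t x : leaves t = [:: x] -> t = Leaf x.
Proof.
case: t => [i [->] //|l r] /= /(congr1 size); rewrite size_cat /= => e; exfalso.
by have := size_leaves_gt0 l; have := size_leaves_gt0 r; lia.
Qed.

Lemma leaves2 t x y : leaves t = [:: x; y] -> t = Node (Leaf x) (Leaf y).
Proof.
case: t => [//|l r] /= e; have sl : size (leaves l) = 1%N.
  by move/(congr1 size): e; rewrite size_cat /=; have := size_leaves_gt0 l;
    have := size_leaves_gt0 r; lia.
move/eqP: e; rewrite -[[:: x; y]]/([:: x] ++ [:: y]) eqseq_cat //.
by case/andP=> /eqP/leaves1 -> /eqP/leaves1 ->.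
Qed.

Lemma leaves3 t x y z : leaves t = [:: x; y; z] ->
  t = Node (Node (Leaf x) (Leaf y)) (Leaf z) \/ t = Node (Leaf x) (Node (Leaf y) (Leaf z)).
Proof.
case: t => [//|l r] /= e; have [sl|sl] : size (leaves l) = 1%N \/ size (leaves l) = 2%N.
- by move/(congr1 size): e; rewrite size_cat /=; have := size_leaves_gt0 l;
    have := size_leaves_gt0 r; lia.
- move/eqP: e; rewrite -[[:: x; y; z]]/([:: x] ++ [:: y; z]) eqseq_cat //.
  by case/andP=> /eqP/leaves1 -> /eqP/leaves2 ->; right.
- move/eqP: e; rewrite -[[:: x; y; z]]/([:: x; y] ++ [:: z]) eqseq_cat //.
  by case/andP=> /eqP/leaves2 -> /eqP/leaves1 ->; left.
Qed.

Lemma lnorm_rcons d s k : s != [::] -> lnorm d (rcons s k) = Node (lnorm d s) (Leaf k).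
Proof. by case: s => [//|h s] _; rewrite /lnorm rcons_cons foldl_rcons. Qed.

Lemma leaves_lnorm d s : s != [::] -> leaves (lnorm d s) = s.
Proof.
elim/last_ind: s => [//|s k IHs] _.
have [->//|s_ne] := eqVneq s [::].
by rewrite lnorm_rcons //= IHs // cats1.
Qed.

Lemma perm_rcons_filter_iota n k : k \in iota 1 n ->
  perm_eq (rcons [seq i <- iota 1 n | i != k] k) (iota 1 n).
Proof.
move=> kin; rewrite -cats1.
have -> : [:: k] = [seq i <- iota 1 n | predC (fun i => i != k) i].
  by rewrite (@eq_filter _ _ (pred1 k)) ?filter_pred1_uniq ?iota_uniq // => i /=; rewrite negbK.
by rewrite perm_filterC.
Qed.

Lemma Ubasis_nth n k : (4 <= n)%N -> k \in iota 1 n ->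
  nth (Leaf 0) (Ubasis n) k.-1 = lnorm 0 (rcons [seq i <- iota 1 n | i != k] k).
Proof.
case: n => [|[|[|[|n]]]] // _ kin; have := kin; rewrite mem_iota => /andP[k_gt0 k_le].
have others_ne : [seq i <- iota 1 n.+4 | i != k] != [::].
  apply/eqP => others0; have := perm_size (perm_rcons_filter_iota kin).
  by rewrite others0 size_iota.
have k_lt : (k.-1 < n.+4)%N by lia.
rewrite /Ubasis (nth_map 0%N) ?size_iota // nth_iota // add1n prednK //.
by rewrite lnorm_rcons //; case: [seq _ <- _ | _] others_ne.
Qed.

Lemma size_Ubasis n : (4 <= n)%N -> size (Ubasis n) = n.
Proof. by case: n => [|[|[|[|n]]]] // _; rewrite size_map size_iota. Qed.

Lemma rightmost_lnorm_rcons d s k : rightmost (lnorm d (rcons s k)) = k.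
Proof. by case: s => [|h s] //; rewrite /lnorm rcons_cons foldl_rcons. Qed.

Lemma rightmost_Ubasis n i : (4 <= n)%N -> (i < n)%N ->
  rightmost (nth (Leaf 0) (Ubasis n) i) = i.+1.
Proof.
move=> n_ge4 lt_in; rewrite -[i]/(i.+1.-1) Ubasis_nth ?rightmost_lnorm_rcons //.
by rewrite mem_iota; lia.
Qed.

Lemma Ubasis_multilinear n : (1 <= n)%N -> all (multilinear n) (Ubasis n).
Proof.
case: n => [|[|[|[|n]]]] // _; apply/(all_nthP (Leaf 0)) => i.
rewrite size_map size_iota => lt_i; have kin : i.+1 \in iota 1 n.+4 by rewrite mem_iota; lia.
rewrite -[i]/(i.+1.-1) Ubasis_nth // /multilinear leaves_lnorm ?perm_rcons_filter_iota //.
by rewrite -size_eq0 size_rcons.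
Qed.

Section LeftNormed.
Variables (K : fieldType) (A : lmodType K) (mul : A -> A -> A) (a : nat -> A).
Hypotheses (HU : U_algebra mul) (charK0 : [pchar K] =i pred0).
Local Notation ev := (nm_eval mul a).

Lemma ev_lnorm d h s : ev (lnorm d (h :: s)) = foldl (fun v i => mul v (a i)) (a h) s.
Proof. by rewrite /lnorm -[a h]/(ev (Leaf h)); elim: s (Leaf h) => //= i s IHs m. Qed.

Lemma ev_assoc l r1 r2 :
  (4 <= size (leaves l) + size (leaves r1) + size (leaves r2))%N ->
  mul (mul (ev l) (ev r1)) (ev r2) = mul (ev l) (mul (ev r1) (ev r2)).
Proof.
move=> big; apply/subr0_eq.
case: l big => [x|l1 l2] big; last exact: (assoc_mul1_eq0 HU charK0).
case: r1 big => [y|r11 r12] big; last exact: (assoc_mul2_eq0 HU charK0).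
by case: r2 big => [//|r21 r22] _; apply: (assoc_mul3_eq0 HU charK0).
Qed.

Lemma ev_mul_lnorm N l r : (size (leaves l) + size (leaves r) <= N)%N ->
  (4 <= size (leaves l) + size (leaves r))%N ->
  mul (ev l) (ev r) = ev (lnorm 0 (leaves l ++ leaves r)).
Proof.
elim: N l r => [|N IHN] l r.
  by have := size_leaves_gt0 l; lia.
(* inner induction on r: l (r1 r2) is rotated into (l r1) r2, whose right subtree is smaller *)
elim: r l => [k|r1 _ r2 IHr2] l /= lr_le lr_ge.
  have l_ne : leaves l != [::] by rewrite -size_eq0 -lt0n size_leaves_gt0.
  rewrite cats1 lnorm_rcons //=.
  case: l l_ne lr_le lr_ge => [//|l1 l2] _ /=; rewrite size_cat => lr_le lr_ge.
  have [big|small] := leqP 4 (size (leaves l1) + size (leaves l2)).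
    by rewrite IHN //; lia.
  have : size (leaves (Node l1 l2)) = 3%N by rewrite /= size_cat; lia.
  case El : (leaves (Node l1 l2)) => [|x [|y [|z []]]] // _.
  by case/leaves3: El => [[-> ->]|[-> ->]] //=; rewrite (mul_mulA HU charK0).
rewrite -ev_assoc; last by rewrite size_cat in lr_ge; lia.
rewrite catA -[leaves l ++ leaves r1]/(leaves (Node l r1)).
by apply: (IHr2 (Node l r1)) => /=; rewrite !size_cat in lr_le lr_ge *; lia.
Qed.

Lemma ev_lnorm_leaves t : (4 <= size (leaves t))%N -> ev t = ev (lnorm 0 (leaves t)).
Proof. by case: t => [//|l r] /=; rewrite size_cat => big; apply: (ev_mul_lnorm (leqnn _)). Qed.

Lemma ev_lnorm_perm s s' k : perm_eq s s' ->
  ev (lnorm 0 (rcons s k)) = ev (lnorm 0 (rcons s' k)).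
Proof.
move=> eq_ss'; apply: (perm_eq_swap_invariant (f := fun s => ev (lnorm 0 (rcons s k)))) eq_ss'.
move=> s1 s2 x y /=; rewrite !rcons_cat !rcons_cons.
have [z [r ->]] : exists z r, rcons s2 k = z :: r.
  by case: s2 => [|z r]; do 2!eexists.
case: s1 => [|h s1]; rewrite !ev_lnorm /=; first by rewrite (mulCl HU (a x)).
by rewrite !foldl_cat /= (mul3_swap23 HU charK0).
Qed.

End LeftNormed.

Section Models.
Variable K : fieldType.

Definition pmul (x y : K^o * K^o) : K^o * K^o := (x.1 * y.1, x.1 * y.2).

Lemma pmul_U : U_algebra pmul.
Proof.
split=> [k [x1 x2] [y1 y2] [z1 z2]|k [x1 x2] [y1 y2] [z1 z2]|[x1 x2] [y1 y2]|
         [x1 x2] [y1 y2]|[x1 x2] [y1 y2] [z1 z2]];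
  rewrite /pmul /=; congr pair; cbn; ring.
Qed.

Definition mark (j i : nat) : K^o * K^o := if i == j then (0, 1) else (1, 0).

Lemma pmul_mark j t : uniq (leaves t) ->
  nm_eval pmul (mark j) t = ((j \notin leaves t)%:R, (rightmost t == j)%:R).
Proof.
elim: t => [i|l IHl r IHr] /=.
  by rewrite /mark mem_seq1 eq_sym; case: eqP.
rewrite cat_uniq => /and3P[uniq_l lr uniq_r]; rewrite IHl // IHr // /pmul /=.
rewrite mem_cat negb_or -mulnb natrM; congr pair.
case: eqP => [<-|_]; last by rewrite mulr0.
rewrite (contra _ lr) ?mulr1 // => in_l.
by apply/hasP; exists (rightmost r); rewrite ?rightmost_leaves.
Qed.

(* On K^3 x K^3 x K, (p, q, r)(p', q', r') := (0, p x p', p . q'): every (xy)z vanishes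
   and z(xy) is the triple product of z, x, y, so x3(x1x2) and x3(x2x1) are separated. *)
Definition cross (u v : K^o * K^o * K^o) : K^o * K^o * K^o :=
  (u.1.2 * v.2 - u.2 * v.1.2, u.2 * v.1.1 - u.1.1 * v.2, u.1.1 * v.1.2 - u.1.2 * v.1.1).

Definition dot (u v : K^o * K^o * K^o) : K^o := u.1.1 * v.1.1 + u.1.2 * v.1.2 + u.2 * v.2.

Definition tmul (x y : (K^o * K^o * K^o) * (K^o * K^o * K^o) * K^o) :
    (K^o * K^o * K^o) * (K^o * K^o * K^o) * K^o :=
  (0, cross x.1.1 y.1.1, dot x.1.1 y.1.2).

Lemma tmul_U : U_algebra tmul.
Proof.
split=> [k [[[[x1 x2] x3] [[x4 x5] x6]] x7] [[[[y1 y2] y3] [[y4 y5] y6]] y7]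
           [[[[z1 z2] z3] [[z4 z5] z6]] z7]|
         k [[[[x1 x2] x3] [[x4 x5] x6]] x7] [[[[y1 y2] y3] [[y4 y5] y6]] y7]
           [[[[z1 z2] z3] [[z4 z5] z6]] z7]|
         [[[[x1 x2] x3] [[x4 x5] x6]] x7] [[[[y1 y2] y3] [[y4 y5] y6]] y7]|
         [[[[x1 x2] x3] [[x4 x5] x6]] x7] [[[[y1 y2] y3] [[y4 y5] y6]] y7]|
         [[[[x1 x2] x3] [[x4 x5] x6]] x7] [[[[y1 y2] y3] [[y4 y5] y6]] y7]
           [[[[z1 z2] z3] [[z4 z5] z6]] z7]];
  rewrite /tmul /cross /dot /=; do ![congr pair]; cbn; ring.
Qed.

Definition unit3 (i : nat) : (K^o * K^o * K^o) * (K^o * K^o * K^o) * K^o :=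
  ((i == 1%N)%:R, (i == 2%N)%:R, (i == 3%N)%:R, 0, 0).

End Models.

Definition lincomb (K : fieldType) (B : seq nmon) (c : 'I_(size B) -> K) : seq (K * nmon) :=
  [seq (c i, nth (Leaf 0) B i) | i <- enum 'I_(size B)].

Lemma U_eq_combination (K : fieldType) (t : nmon) (B : seq nmon) (c : 'I_(size B) -> K) :
  (forall (A : lmodType K) (mul : A -> A -> A), U_algebra mul -> forall a,
     nm_eval mul a t = \sum_(i < size B) c i *: nm_eval mul a (nth (Leaf 0) B i)) ->
  U_eq [:: (1, t)] (lincomb c).
Proof. by move=> ev_t A mul HU a; rewrite /lincomb big_seq1 scale1r big_map big_enum /= ev_t. Qed.

Lemma U_eq_basis_elt (K : fieldType) (t : nmon) (B : seq nmon) (i0 : 'I_(size B)) :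
  (forall (A : lmodType K) (mul : A -> A -> A), U_algebra mul -> forall a,
     nm_eval mul a t = nm_eval mul a (nth (Leaf 0) B i0)) ->
  exists c : 'I_(size B) -> K, U_eq [:: (1, t)] (lincomb c).
Proof.
move=> ev_t; exists (fun i => (i == i0)%:R); apply: U_eq_combination => A mul HU a.
rewrite (bigD1 i0) //= eqxx scale1r big1 ?addr0 ?ev_t // => i /negbTE ->.
exact: scale0r.
Qed.

Lemma Ubasis_span_ge4 (K : fieldType) (charK0 : [pchar K] =i pred0) n t :
  (4 <= n)%N -> multilinear n t ->
  exists c : 'I_(size (Ubasis n)) -> K, U_eq [:: (1, t)] (lincomb c).
Proof.
move=> n_ge4 t_ml; have size_t : size (leaves t) = n by rewrite (perm_size t_ml) size_iota.
case/lastP E : (leaves t) => [|s k]; first by move: n_ge4; rewrite -size_t E.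
have kin : k \in iota 1 n by rewrite -(perm_mem t_ml) E mem_rcons mem_head.
have k_lt : (k.-1 < size (Ubasis n))%N by move: kin; rewrite size_Ubasis // mem_iota; lia.
apply: (@U_eq_basis_elt K t (Ubasis n) (Ordinal k_lt)) => A mul HU a /=.
rewrite Ubasis_nth // (ev_lnorm_leaves _ HU charK0) ?size_t // E.
apply: (ev_lnorm_perm _ HU charK0).
have : perm_eq (rcons s k) (rcons [seq i <- iota 1 n | i != k] k).
  by rewrite -E; apply: perm_trans t_ml _; rewrite perm_sym perm_rcons_filter_iota.
by rewrite perm_rcons perm_sym perm_rcons perm_cons perm_sym.
Qed.

(* Coordinates of the multilinear monomials of degree 3 in the basis [Ubasis 3]. *)
Definition coord3 (t : nmon) : seq int :=
  match t with
  | Node (Node (Leaf 1) (Leaf 2)) (Leaf 3) | Node (Node (Leaf 2) (Leaf 1)) (Leaf 3) =>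
      [:: 1; 0; 0; 0]%R
  | Node (Node (Leaf 1) (Leaf 3)) (Leaf 2) | Node (Node (Leaf 3) (Leaf 1)) (Leaf 2) =>
      [:: 0; 1; 0; 0]%R
  | Node (Node (Leaf 2) (Leaf 3)) (Leaf 1) | Node (Node (Leaf 3) (Leaf 2)) (Leaf 1) =>
      [:: 0; -1; 1; 1]%R
  | Node (Leaf 1) (Node (Leaf 2) (Leaf 3)) => [:: 1; -1; 1; 0]%R
  | Node (Leaf 1) (Node (Leaf 3) (Leaf 2)) => [:: 0; 2; -1; 0]%R
  | Node (Leaf 2) (Node (Leaf 1) (Leaf 3)) => [:: 1; 1; -1; 0]%R
  | Node (Leaf 2) (Node (Leaf 3) (Leaf 1)) => [:: 0; -2; 2; 1]%R
  | Node (Leaf 3) (Node (Leaf 1) (Leaf 2)) => [:: 0; 0; 1; 0]%R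
  | Node (Leaf 3) (Node (Leaf 2) (Leaf 1)) => [:: 0; 0; 0; 1]%R
  | _ => [::]%R
  end%N.

Lemma Ubasis_span_small (K : fieldType) n t : (1 <= n <= 3)%N -> multilinear n t ->
  exists c : 'I_(size (Ubasis n)) -> K, U_eq [:: (1, t)] (lincomb c).
Proof.
case: n => [|[|[|[|n]]]] // _; rewrite /multilinear -mem_permutations !inE.
- by move/eqP/leaves1 ->; apply: (@U_eq_basis_elt K _ (Ubasis 1) ord0).
- by case/orP=> /eqP/leaves2 ->; [apply: (@U_eq_basis_elt K _ (Ubasis 2) ord0)
                                 | apply: (@U_eq_basis_elt K _ (Ubasis 2) (lift ord0 ord0))].
move=> leaves_t; exists (fun i => ((coord3 t)`_i)%:~R); move: leaves_t.
do ?[case/orP=> [/eqP/leaves3[]->|]]; try move/eqP/leaves3=> [] ->.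
all: apply: U_eq_combination => A mul HU a; rewrite /= !big_ord_recl big_ord0 /= !scaler_int.
all: set x := a 1%N; set y := a 2%N; set z := a 3%N.
all: rewrite ?(mul3_1_23 HU x y z, mul3_1_32 HU x y z, mul3_2_13 HU x y z, mul3_23_1 HU x y z,
               mul3_2_31 HU x y z, mulCl HU y x z, mulCl HU z x y, mulCl HU z y x).
all: lin_zmod.
Qed.

Lemma U_eq0_mark (K : fieldType) n (c : 'I_(size (Ubasis n)) -> K) j : (1 <= n)%N ->
  U_eq (lincomb c) [::] ->
  \sum_(i < size (Ubasis n)) c i * (rightmost (nth (Leaf 0) (Ubasis n) i) == j)%:R = 0.
Proof.
move=> n_gt0 c0; have := c0 _ _ (pmul_U K) (mark K j).
rewrite /lincomb big_map big_enum big_nil => /(congr1 snd); rewrite raddf_sum => sum0.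
rewrite -[RHS]sum0; apply: eq_big => // i _; rewrite /= pmul_mark //.
have /(all_nthP (Leaf 0)) basis_ml := Ubasis_multilinear n_gt0.
by have /perm_uniq -> := basis_ml _ (ltn_ord i); apply: iota_uniq.
Qed.

Lemma U_eq0_coef (K : fieldType) n (c : 'I_(size (Ubasis n)) -> K) (i : 'I_(size (Ubasis n))) :
  (1 <= n)%N -> U_eq (lincomb c) [::] ->
  (forall i' : 'I_(size (Ubasis n)),
     rightmost (nth (Leaf 0) (Ubasis n) i') = rightmost (nth (Leaf 0) (Ubasis n) i) -> i' = i) ->
  c i = 0.
Proof.
move=> n_gt0 c0 rightmost_inj.
have := U_eq0_mark (rightmost (nth (Leaf 0) (Ubasis n) i)) n_gt0 c0.
rewrite (bigD1 i) //= eqxx mulr1 big1 ?addr0 // => i' /negbTE i'_ne.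
by case: eqP => [/rightmost_inj/eqP|]; rewrite ?i'_ne ?mulr0.
Qed.

Lemma Ubasis_free_ne3 (K : fieldType) n (c : 'I_(size (Ubasis n)) -> K) :
  (1 <= n)%N -> n != 3%N -> U_eq (lincomb c) [::] -> forall i, c i = 0.
Proof.
move=> n_gt0 n_ne3 c0 i; apply: (U_eq0_coef n_gt0 c0).
case: n n_gt0 n_ne3 c c0 i => [|[|[|[|n]]]] // _ _ _ _.
- by move=> [[|//] ?] [[|//] ?] _; apply: val_inj.
- by move=> [[|[|//]] ?] [[|[|//]] ?] //= _; apply: val_inj.
have lt_n4 (j : 'I_(size (Ubasis n.+4))) : (j < n.+4)%N by case: j => m; rewrite size_Ubasis.
by move=> i i'; rewrite !rightmost_Ubasis // => -[] /val_inj.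
Qed.

Lemma Ubasis_free_3 (K : fieldType) (c : 'I_(size (Ubasis 3)) -> K) :
  U_eq (lincomb c) [::] -> forall i, c i = 0.
Proof.
(* [mark 3], [mark 1] and [mark 2] give c_0 = 0, c_3 = 0 and c_1 + c_2 = 0; [tmul] gives
   c_2 = c_3. *)
move=> c0.
have c_0 : c ord0 = 0.
  by apply: (U_eq0_coef _ c0) => // -[[|[|[|[|//]]]] ?] //= _; apply: val_inj.
have c_3 : c (lift ord0 (lift ord0 (lift ord0 ord0))) = 0.
  by apply: (U_eq0_coef _ c0) => // -[[|[|[|[|//]]]] ?] //= _; apply: val_inj.
have := @U_eq0_mark K 3 c 2 isT c0; rewrite !big_ord_recl big_ord0 /=.
rewrite !(mulr0, mulr1, addr0, add0r) => c12.
have := c0 _ _ (tmul_U K) (unit3 K).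
rewrite /lincomb big_map big_enum big_nil => /(congr1 snd).
rewrite raddf_sum !big_ord_recl big_ord0 /=.
rewrite /tmul /cross /dot /=; cbn.
rewrite !(mul0r, mulr0, mul1r, mulr1, subr0, sub0r, addr0, add0r, mulrN1) c_3 oppr0 addr0.
move=> c_2; move: c12; rewrite c_2 addr0 => c_1.
by case=> [[|[|[|[|//]]]] lt_i]; [rewrite -c_0 | rewrite -c_1 | rewrite -c_2 | rewrite -c_3];
  congr c; apply: val_inj.
Qed.

Lemma Ubasis_span (K : fieldType) (charK0 : [pchar K] =i pred0) n t :
  (1 <= n)%N -> multilinear n t ->
  exists c : 'I_(size (Ubasis n)) -> K, U_eq [:: (1, t)] (lincomb c).
Proof.
move=> n_gt0; have [n_ge4|n_lt4] := leqP 4 n; first exact: Ubasis_span_ge4.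
by apply: Ubasis_span_small; rewrite n_gt0; lia.
Qed.

Lemma Ubasis_free (K : fieldType) n (c : 'I_(size (Ubasis n)) -> K) : (1 <= n)%N ->
  U_eq (lincomb c) [::] -> forall i, c i = 0.
Proof.
move=> n_gt0; have [n3|n_ne3] := eqVneq n 3%N; last exact: Ubasis_free_ne3.
by move: c; rewrite n3; apply: Ubasis_free_3.
Qed.

Theorem mainTheorem2 (K : fieldType) (charK0 : [pchar K] =i pred0) (n : nat) (hn : (1 <= n)%N) :
  (* the basis elements are multilinear monomials of degree n *)
  all (multilinear n) (Ubasis n) /\
  (* they span U_n: every multilinear monomial is, modulo the identities of U,
     a K-linear combination of them *)
  (forall t : nmon, multilinear n t ->
     exists c : 'I_(size (Ubasis n)) -> K,
       U_eq [:: (1, t)] [seq (c i, nth (Leaf 0) (Ubasis n) i) | i <- enum 'I_(size (Ubasis n))]) /\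
  (* they are linearly independent in U_n *)
  (forall c : 'I_(size (Ubasis n)) -> K,
     U_eq [seq (c i, nth (Leaf 0) (Ubasis n) i) | i <- enum 'I_(size (Ubasis n))] [::] ->
     forall i, c i = 0).
Proof.
split; first exact: Ubasis_multilinear.
split=> [t|c]; [exact: Ubasis_span | exact: Ubasis_free].
Qed.
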